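(* In any execution of the algorithm described in the context on a camera object $S$ and an associated versioned CAS object $O$ (after $O$'s constructor has completed), once a VNode is in the version list of $O$, it remains in the version list forever.
   Context: Camera $S$ has an integer field timestamp, initially 0; takeSnapshot(): read $t:=S.\mathit{timestamp}$, perform CAS$(S.\mathit{timestamp},t,t+1)$, return $t$. A VNode has fields val and nextv (both immutable after creation) and ts (an integer or special value TBD, initially TBD). Versioned CAS object $O$ has a field $\mathit{VHead}$. Constructor with value $v$: $\mathit{VHead}:=$ new VNode(val $v$, nextv NULL); initTS($\mathit{VHead}$). initTS($n$): if $n.ts=$TBD, read $c:=S.\mathit{timestamp}$ and CAS$(n.ts,\mathrm{TBD},c)$. readSnapshot($ts$): $node:=\mathit{VHead}$; initTS($node$); while $node.ts>ts$, $node:=node.nextv$; return $node.val$. vRead(): $h:=\mathit{VHead}$; initTS($h$); return $h.val$. vCAS(oldV,newV): $h:=\mathit{VHead}$; initTS($h$); if $h.val\neq$ oldV return false; if newV $=$ oldV return true; $m:=$ new VNode(val newV, nextv $h$); if CAS$(\mathit{VHead},h,m)$ succeeds, initTS($m$) and return true; else delete $m$, call initTS on the current value of $\mathit{VHead}$, return false. The version list of $O$ is the list obtained by starting at the VNode pointed to by $\mathit{VHead}$ and following nextv pointers; its head is the VNode pointed to by $\mathit{VHead}$. *)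

(* Operational (interleaving) semantics of the camera / versioned-CAS
   algorithm; every step is one atomic shared-memory access of one process
   (purely local work and reads of immutable fields are merged into steps). *)
From mathcomp Require Import ssreflect ssrbool eqtype ssrnat.

Set Implicit Arguments.
Unset Strict Implicit.

(* A VNode: val and nextv immutable, ts = None encodes TBD.
   VNodes are identified by their address (a nat). *)
Record vnode (V : Type) := VNode { val : V; nextv : option nat; ts : option nat }.

(* what to do after an initTS(n) call returns *)
Inductive cont (V : Type) :=
| K_ctor
| K_rs (t : nat)              (* readSnapshot(t): start the traversal *)
| K_vread                     (* vRead: return h.val *)
| K_vcas (oldV newV : V)      (* vCAS: compare h.val with oldV, ... *)
| K_true                      (* vCAS: return true *)
| K_false.                    (* vCAS: return false *)

Inductive pc (V : Type) :=
| Idle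
| TS_read                               (* takeSnapshot: t := S.timestamp *)
| TS_cas (t : nat)                      (* takeSnapshot: CAS(S.timestamp,t,t+1) *)
| IT_check (n : nat) (k : cont V)       (* initTS(n): test n.ts = TBD *)
| IT_read (n : nat) (k : cont V)        (* initTS(n): c := S.timestamp *)
| IT_cas (n c : nat) (k : cont V)       (* initTS(n): CAS(n.ts,TBD,c) *)
| Ret (n : nat) (k : cont V)            (* initTS(n) has returned *)
| RS_loop (n t : nat)                   (* readSnapshot: while node.ts > t ... *)
| VC_cas (h m : nat)                    (* vCAS: CAS(VHead,h,m) *)
| VC_reread.                            (* vCAS: initTS(current VHead) *)

Arguments Idle {V}. Arguments TS_read {V}. Arguments TS_cas {V}.
Arguments RS_loop {V}. Arguments VC_cas {V}. Arguments VC_reread {V}.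
Arguments K_ctor {V}. Arguments K_rs {V}. Arguments K_vread {V}.
Arguments K_true {V}. Arguments K_false {V}.

(* global state: the camera field, the field VHead of O (None before the
   constructor writes it), the heap of VNodes (None = unallocated/deleted),
   the next fresh address, the local state of every process (processes are
   indexed by nat), and whether the constructor has started / completed. *)
Record state (V : Type) := St {
  timestamp : nat;
  vhead : option nat;
  heap : nat -> option (vnode V);
  fresh : nat;
  pcs : nat -> pc V;
  ctor_started : bool;
  constructed : bool }.

Definition upd {A : Type} (f : nat -> A) (x : nat) (v : A) : nat -> A :=
  fun y => if y == x then v else f y.

Definition init_state (V : Type) : state V :=
  St 0 None (fun _ => None) 0 (fun _ => Idle) false false.

Section Ops.
Context {V : Type}.
Definition set_pc (s : state V) p c :=
  St (timestamp s) (vhead s) (heap s) (fresh s) (upd (pcs s) p c) (ctor_started s) (constructed s).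
Definition set_timestamp (s : state V) t :=
  St t (vhead s) (heap s) (fresh s) (pcs s) (ctor_started s) (constructed s).
Definition set_vhead (s : state V) h :=
  St (timestamp s) (Some h) (heap s) (fresh s) (pcs s) (ctor_started s) (constructed s).
Definition set_node (s : state V) n (o : option (vnode V)) :=
  St (timestamp s) (vhead s) (upd (heap s) n o) (fresh s) (pcs s) (ctor_started s) (constructed s).
Definition alloc (s : state V) (nd : vnode V) :=
  St (timestamp s) (vhead s) (upd (heap s) (fresh s) (Some nd)) (fresh s).+1
     (pcs s) (ctor_started s) (constructed s).
Definition set_ctor_started (s : state V) :=
  St (timestamp s) (vhead s) (heap s) (fresh s) (pcs s) true (constructed s).
Definition set_constructed (s : state V) :=
  St (timestamp s) (vhead s) (heap s) (fresh s) (pcs s) (ctor_started s) true.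
End Ops.

Inductive pstep {V : eqType} (p : nat) : state V -> state V -> Prop :=
| st_ts_invoke s : pcs s p = Idle -> pstep p s (set_pc s p TS_read)
| st_ts_read s : pcs s p = TS_read -> pstep p s (set_pc s p (TS_cas (timestamp s)))
| st_ts_cas_ok s t : pcs s p = TS_cas t -> timestamp s = t ->
    pstep p s (set_pc (set_timestamp s t.+1) p Idle)
| st_ts_cas_fail s t : pcs s p = TS_cas t -> timestamp s <> t ->
    pstep p s (set_pc s p Idle)
| st_ctor s (v : V) : ctor_started s = false -> pcs s p = Idle ->
    pstep p s (set_pc (set_ctor_started (set_vhead (alloc s (VNode v None None)) (fresh s)))
                      p (IT_check (fresh s) K_ctor))
| st_rs_invoke s t h : constructed s = true -> pcs s p = Idle -> vhead s = Some h ->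
    pstep p s (set_pc s p (IT_check h (K_rs t)))
| st_vread_invoke s h : constructed s = true -> pcs s p = Idle -> vhead s = Some h ->
    pstep p s (set_pc s p (IT_check h K_vread))
| st_vcas_invoke s h (oldV newV : V) : constructed s = true -> pcs s p = Idle -> vhead s = Some h ->
    pstep p s (set_pc s p (IT_check h (K_vcas oldV newV)))
| st_it_check_done s n k nd x : pcs s p = IT_check n k -> heap s n = Some nd -> ts nd = Some x ->
    pstep p s (set_pc s p (Ret n k))
| st_it_check_tbd s n k nd : pcs s p = IT_check n k -> heap s n = Some nd -> ts nd = None ->
    pstep p s (set_pc s p (IT_read n k))
| st_it_read s n k : pcs s p = IT_read n k ->
    pstep p s (set_pc s p (IT_cas n (timestamp s) k))
| st_it_cas_ok s n c k nd : pcs s p = IT_cas n c k -> heap s n = Some nd -> ts nd = None ->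
    pstep p s (set_pc (set_node s n (Some (VNode (val nd) (nextv nd) (Some c)))) p (Ret n k))
| st_it_cas_fail s n c k nd x : pcs s p = IT_cas n c k -> heap s n = Some nd -> ts nd = Some x ->
    pstep p s (set_pc s p (Ret n k))
| st_ctor_done s n : pcs s p = Ret n K_ctor ->
    pstep p s (set_pc (set_constructed s) p Idle)
| st_rs_start s n t : pcs s p = Ret n (K_rs t) -> pstep p s (set_pc s p (RS_loop n t))
| st_rs_next s n t nd x b : pcs s p = RS_loop n t -> heap s n = Some nd ->
    ts nd = Some x -> t < x -> nextv nd = Some b ->
    pstep p s (set_pc s p (RS_loop b t))
| st_rs_return s n t nd : pcs s p = RS_loop n t -> heap s n = Some nd ->
    ~ (exists x b, ts nd = Some x /\ t < x /\ nextv nd = Some b) ->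
    pstep p s (set_pc s p Idle)
| st_vread_return s n nd : pcs s p = Ret n K_vread -> heap s n = Some nd ->
    pstep p s (set_pc s p Idle)
| st_vcas_neq s n oldV newV nd : pcs s p = Ret n (K_vcas oldV newV) -> heap s n = Some nd ->
    val nd != oldV -> pstep p s (set_pc s p Idle)
| st_vcas_same s n oldV newV nd : pcs s p = Ret n (K_vcas oldV newV) -> heap s n = Some nd ->
    val nd = oldV -> newV = oldV -> pstep p s (set_pc s p Idle)
| st_vcas_alloc s n oldV newV nd : pcs s p = Ret n (K_vcas oldV newV) -> heap s n = Some nd ->
    val nd = oldV -> newV <> oldV ->
    pstep p s (set_pc (alloc s (VNode newV (Some n) None)) p (VC_cas n (fresh s)))
| st_vcas_cas_ok s h m : pcs s p = VC_cas h m -> vhead s = Some h ->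
    pstep p s (set_pc (set_vhead s m) p (IT_check m K_true))
| st_vcas_cas_fail s h m : pcs s p = VC_cas h m -> vhead s <> Some h ->
    pstep p s (set_pc (set_node s m None) p VC_reread)
| st_vcas_reread s h : pcs s p = VC_reread -> vhead s = Some h ->
    pstep p s (set_pc s p (IT_check h K_false))
| st_vcas_true s n : pcs s p = Ret n K_true -> pstep p s (set_pc s p Idle)
| st_vcas_false s n : pcs s p = Ret n K_false -> pstep p s (set_pc s p Idle).

Definition step {V : eqType} (s s' : state V) : Prop := exists p, pstep p s s'.

Inductive steps {V : eqType} : state V -> state V -> Prop :=
| steps_refl s : steps s s
| steps_cons s1 s2 s3 : step s1 s2 -> steps s2 s3 -> steps s1 s3.

Inductive reach {V : Type} (hp : nat -> option (vnode V)) : nat -> nat -> Prop :=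
| reach_here a : reach hp a a
| reach_next a b n nd : hp a = Some nd -> nextv nd = Some b -> reach hp b n -> reach hp a n.

Definition in_version_list {V : Type} (s : state V) (n : nat) : Prop :=
  exists h, vhead s = Some h /\ reach (heap s) h n.

From Pilot Require Import Defs.
From mathcomp Require Import ssreflect ssrbool eqtype ssrnat.
From mathcomp Require Import zify.
From Stdlib Require Import Lia.

(* VHead only moves through a successful CAS(VHead, h, m) whose node m already
   has nextv = h, so the old version list becomes the tail of the new one.  All
   other heap writes either keep the nextv field of the node they touch
   (initTS), allocate at a fresh address, or delete the node m of a failed vCAS.
   The last case is harmless because of the invariant [inv]: while a vCAS is
   pending, its node m is private to its process (neither VHead, nor a nextv
   pointer, nor another process refers to it), and every address in use lies
   below [fresh]. *)

Set Implicit Arguments.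
Unset Strict Implicit.

Section VersionList.
Variable V : eqType.
Implicit Types (s : state V) (hp : nat -> option (vnode V)).

Definition points_to hp a b := exists2 nd, hp a = Some nd & nextv nd = Some b.

Definition keeps_links hp hp' :=
  forall a nd, hp a = Some nd -> exists2 nd', hp' a = Some nd' & nextv nd' = nextv nd.

Lemma points_to_upd_same_link hp n nd nd' a b :
  hp n = Some nd -> nextv nd' = nextv nd ->
  points_to (upd hp n (Some nd')) a b <-> points_to hp a b.
Proof.
move=> hn same; rewrite /points_to /upd; case: eqP => [-> | _] //; rewrite hn.
by split=> -[_ [<-] nb]; [exists nd; rewrite // -same | exists nd'; rewrite // same].
Qed.

Lemma points_to_delete hp m a b : points_to (upd hp m None) a b -> points_to hp a b.
Proof. by rewrite /points_to /upd; case: eqP => // _ []. Qed.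

Lemma keeps_links_upd_unallocated hp x o : hp x = None -> keeps_links hp (upd hp x o).
Proof. by move=> hx a nd; rewrite /upd; case: eqP => [-> | _]; [rewrite hx | exists nd]. Qed.

Lemma keeps_links_upd_same_link hp x nd nd' :
  hp x = Some nd -> nextv nd' = nextv nd -> keeps_links hp (upd hp x (Some nd')).
Proof.
move=> hx same a nd0; rewrite /upd; case: eqP => [-> | _]; last by exists nd0.
by rewrite hx => -[<-]; exists nd'.
Qed.

Lemma reach_keeps_links hp hp' a n : keeps_links hp hp' -> reach hp a n -> reach hp' a n.
Proof.
move=> keep; elim=> [b | b c k nd hpb nextb _ IH]; first exact: reach_here.
have [nd' hp'b next'] := keep _ _ hpb.
by apply: reach_next hp'b _ IH; rewrite next'.
Qed.

Lemma reach_upd_unpointed hp m o a n :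
  (forall x, ~ points_to hp x m) -> a <> m -> reach hp a n -> reach (upd hp m o) a n.
Proof.
move=> unpointed am r; elim: r am => [b | b c k nd hpb nextb _ IH] bm; first exact: reach_here.
have cm : c <> m by move=> cm; apply: (unpointed b); exists nd; rewrite // -cm.
by apply: (reach_next (nd := nd)) nextb (IH cm); rewrite /upd; case: eqP.
Qed.

Definition refers_to (c : pc V) (a : nat) : Prop :=
  match c with
  | IT_check n _ | IT_read n _ | IT_cas n _ _ | Ret n _ | RS_loop n _ => n = a
  | VC_cas h m => h = a \/ m = a
  | _ => False
  end.

Definition private_node s q h m :=
  [/\ points_to (heap s) m h, vhead s <> Some m,
      forall a, ~ points_to (heap s) a m &
      forall p, p <> q -> ~ refers_to (pcs s p) m].

Definition holdable s p a :=
  [/\ a < fresh s, ctor_started s & forall q h, q <> p -> pcs s q <> VC_cas h a].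

Record inv s : Prop := {
  inv_unallocated : forall a, fresh s <= a -> heap s a = None;
  inv_vhead_lt : forall h, vhead s = Some h -> h < fresh s;
  inv_link_lt : forall a b, points_to (heap s) a b -> b < fresh s;
  inv_refers_lt : forall p a, refers_to (pcs s p) a -> a < fresh s;
  inv_started_vhead : forall h, vhead s = Some h -> ctor_started s;
  inv_started_refers : forall p a, refers_to (pcs s p) a -> ctor_started s;
  inv_started_constructed : constructed s -> ctor_started s;
  inv_private : forall q h m, pcs s q = VC_cas h m -> private_node s q h m }.

Lemma inv_init : inv (init_state V).
Proof. by split=> //= a b []. Qed.

Lemma holdable_refers s p a : inv s -> refers_to (pcs s p) a -> holdable s p a.
Proof.
move=> I pa; split; [exact: inv_refers_lt pa | exact: inv_started_refers pa |].
move=> q h qp /(inv_private I) [_ _ _ others].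
by apply: (others p) pa => pq; rewrite pq in qp.
Qed.

Lemma holdable_vhead s p h : inv s -> vhead s = Some h -> holdable s p h.
Proof.
move=> I vh; split; [exact: inv_vhead_lt vh | exact: inv_started_vhead vh |].
by move=> q h' _ /(inv_private I) [].
Qed.

Lemma holdable_link s p a b :
  inv s -> ctor_started s -> points_to (heap s) a b -> holdable s p b.
Proof.
move=> I started ab; split=> //; first exact: inv_link_lt ab.
by move=> q h _ /(inv_private I) [_ _ /(_ a)].
Qed.

Lemma no_vcas_before_ctor s q h m :
  inv s -> ctor_started s = false -> pcs s q <> VC_cas h m.
Proof.
move=> I not_started qm.
suff : ctor_started s by rewrite not_started.
by apply: (inv_started_refers I (p := q) (a := m)); rewrite qm; right.
Qed.

Lemma private_node_set_pc s p c q h m :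
  private_node s q h m -> (q <> p -> ~ refers_to c m) ->
  private_node (set_pc s p c) q h m.
Proof.
case=> mh vh unpointed others c_m; split=> // p'; rewrite /= /upd.
by case: eqP => [-> qp | _]; [apply: c_m => pq; rewrite pq in qp | apply: others].
Qed.

Lemma inv_set_pc s p c :
  inv s -> (forall a, refers_to c a -> holdable s p a) ->
  (forall h m, c = VC_cas h m -> private_node s p h m) ->
  inv (set_pc s p c).
Proof.
case=> unalloc vh_lt link_lt ref_lt st_vh st_ref st_con priv hold own.
split=> //= [q a | q a | q h m]; rewrite /upd; case: eqP => [qp | qp].
- by case/hold.
- exact: ref_lt.
- by case/hold.
- exact: st_ref.
- by rewrite qp => /own/private_node_set_pc; apply.
- move=> qm; apply: private_node_set_pc (priv _ _ _ qm) _ => _ /hold [_ _].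
  by move/(_ q h qp).
Qed.

Lemma inv_set_pc_local s p c :
  inv s -> (forall a, refers_to c a -> refers_to (pcs s p) a) ->
  (forall h m, c <> VC_cas h m) -> inv (set_pc s p c).
Proof.
move=> I sub not_vcas; apply: inv_set_pc => // [a /sub | h m /not_vcas] //.
exact: holdable_refers.
Qed.

Lemma inv_set_timestamp s t : inv s -> inv (set_timestamp s t).
Proof. by case; split. Qed.

Lemma inv_set_constructed s : inv s -> ctor_started s -> inv (set_constructed s).
Proof. by case; split. Qed.

Lemma inv_set_node_same_link s n nd nd' :
  inv s -> heap s n = Some nd -> nextv nd' = nextv nd -> inv (set_node s n (Some nd')).
Proof.
move=> I hn same; have link a b := points_to_upd_same_link a b hn same.
case: I => unalloc vh_lt link_lt ref_lt st_vh st_ref st_con priv.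
split=> //= [a fa | a b /link /link_lt // | q h m /priv [mh vh unp others]].
- rewrite /upd; case: eqP => [an | _]; last exact: unalloc.
  by move: hn; rewrite -an unalloc.
- by split=> // [|a /link /unp]; first exact/link.
Qed.

Lemma inv_alloc s nd :
  inv s -> (forall b, nextv nd = Some b -> b < fresh s /\ forall q h, pcs s q <> VC_cas h b) ->
  inv (alloc s nd).
Proof.
case=> unalloc vh_lt link_lt ref_lt st_vh st_ref st_con priv fresh_next.
split=> //= [a fa | h /vh_lt | a b | p a /ref_lt | q h m qm]; try lia.
- rewrite /upd; case: eqP => [af | _]; [lia | apply: unalloc; lia].
- rewrite /points_to /upd; case: eqP => [_ [_ [<-] /fresh_next [] ] | _ /link_lt]; lia.
- have m_lt : m < fresh s by apply: (ref_lt q); rewrite qm; right.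
  have [mh vh unp others] := priv _ _ _ qm.
  split=> // [|a]; rewrite /points_to /= /upd; case: eqP => [mf | _] //; try lia.
  + by move=> [_ [<-] /fresh_next [_ /(_ q h)]].
  + exact: unp.
Qed.

Lemma private_node_alloc s q nd h :
  inv s -> nextv nd = Some h -> h < fresh s -> private_node (alloc s nd) q h (fresh s).
Proof.
move=> I nh h_lt; split=> /= [|vh | a | p _]; rewrite ?/points_to /= /upd ?eqxx.
- by exists nd.
- by move: (inv_vhead_lt I vh); rewrite ltnn.
- case: eqP => [_ [_ [<-]] | _ /(inv_link_lt I)]; last by rewrite ltnn.
  by rewrite nh => -[hf]; move: h_lt; rewrite hf ltnn.
- by move/(inv_refers_lt I); rewrite ltnn.
Qed.

Lemma inv_set_vhead s p m :
  inv s -> refers_to (pcs s p) m -> (forall h, pcs s p <> VC_cas h m) -> inv (set_vhead s m).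
Proof.
case=> unalloc vh_lt link_lt ref_lt st_vh st_ref st_con priv pm not_owned.
split=> //= [h [<-] | h _ | q h m' qm']; first exact: ref_lt pm; first exact: st_ref pm.
have [m'h _ unp others] := priv _ _ _ qm'; split=> // -[mm'].
case: (eqVneq q p) => [qp | qp]; first by apply: (not_owned h); rewrite -qp mm'.
by apply: (others p) => [pq | ]; [rewrite pq eqxx in qp | rewrite -mm'].
Qed.

Lemma inv_delete s m :
  inv s -> vhead s <> Some m -> (forall a, ~ points_to (heap s) a m) ->
  (forall p, ~ refers_to (pcs s p) m) -> inv (set_node s m None).
Proof.
case=> unalloc vh_lt link_lt ref_lt st_vh st_ref st_con priv vh_m unp_m unref_m.
split=> //= [a fa | a b /points_to_delete /link_lt // | q h m' qm'].
- by rewrite /upd; case: eqP => // _; apply: unalloc.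
- have m'm : m' <> m by move=> m'm; apply: (unref_m q); rewrite qm' -m'm; right.
  have [m'h vh unp others] := priv _ _ _ qm'.
  split=> // [|a /points_to_delete /unp //].
  by rewrite /points_to /= /upd; case: eqP.
Qed.

Lemma inv_read_vhead s p h k : inv s -> vhead s = Some h -> inv (set_pc s p (IT_check h k)).
Proof. by move=> I vh; apply: inv_set_pc => //= a <-; apply: holdable_vhead vh. Qed.

Lemma inv_ctor s p v :
  inv s -> ctor_started s = false ->
  inv (set_pc (set_ctor_started (set_vhead (alloc s (VNode v None None)) (fresh s)))
              p (IT_check (fresh s) K_ctor)).
Proof.
move=> I not_started; have no_vcas := no_vcas_before_ctor I not_started.
have I1 : inv (alloc s (VNode v None None)) by apply: inv_alloc.
have I2 : inv (set_ctor_started (set_vhead (alloc s (VNode v None None)) (fresh s))).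
  case: I1 => *; split=> //= [h [<-] | q h m qm]; [lia | by case: (no_vcas q h m)].
apply: inv_set_pc I2 _ _ => //= a <-; split=> //= q h _; exact: no_vcas.
Qed.

Lemma inv_ctor_done s p n :
  inv s -> pcs s p = Ret n K_ctor -> inv (set_pc (set_constructed s) p Idle).
Proof.
move=> I pn; apply: inv_set_pc_local => //; apply: inv_set_constructed => //.
by apply: (inv_started_refers I (p := p) (a := n)); rewrite pn.
Qed.

Lemma inv_it_cas_ok s p n c k nd :
  inv s -> pcs s p = IT_cas n c k -> heap s n = Some nd ->
  inv (set_pc (set_node s n (Some (VNode (Defs.val nd) (nextv nd) (Some c)))) p (Ret n k)).
Proof.
by move=> I pn hn; apply: inv_set_pc_local (inv_set_node_same_link I hn _) _ _ => //= a; rewrite pn.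
Qed.

Lemma inv_rs_next s p n t nd b :
  inv s -> pcs s p = RS_loop n t -> heap s n = Some nd -> nextv nd = Some b ->
  inv (set_pc s p (RS_loop b t)).
Proof.
move=> I pn hn nb.
have started : ctor_started s by apply: (inv_started_refers I (p := p) (a := n)); rewrite pn.
have n_b : points_to (heap s) n b by exists nd.
by apply: inv_set_pc => //= a <-; apply: holdable_link I started n_b.
Qed.

Lemma inv_vcas_alloc s p n k newV :
  inv s -> pcs s p = Ret n k ->
  inv (set_pc (alloc s (VNode newV (Some n) None)) p (VC_cas n (fresh s))).
Proof.
move=> I pn; have p_n : refers_to (pcs s p) n by rewrite pn.
have [n_lt _ n_unowned] := holdable_refers I p_n.
have I1 : inv (alloc s (VNode newV (Some n) None)).
  apply: inv_alloc => // _ [<-]; split=> // q h.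
  by case: (eqVneq q p) => [-> | /eqP qp]; [rewrite pn | exact: n_unowned].
apply: (inv_set_pc I1) => [a /= [<- | <-] | h m [<- <-]].
- exact: holdable_refers I1 p_n.
- split=> /= [|| q h _ qf]; [exact: ltnSn | exact: inv_started_refers I _ _ p_n |].
  have : fresh s < fresh s by apply: (inv_refers_lt I (p := q)); rewrite qf; right.
  by rewrite ltnn.
- exact: private_node_alloc.
Qed.

Lemma inv_vcas_cas_ok s p h m :
  inv s -> pcs s p = VC_cas h m -> inv (set_pc (set_vhead s m) p (IT_check m K_true)).
Proof.
move=> I pm.
have I1 : inv (set_pc s p (IT_check m K_true)).
  by apply: inv_set_pc_local => //= a <-; rewrite pm; right.
by apply: (inv_set_vhead I1 (p := p)) => [|h']; rewrite /= /upd eqxx.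
Qed.

Lemma inv_vcas_cas_fail s p h m :
  inv s -> pcs s p = VC_cas h m -> inv (set_pc (set_node s m None) p VC_reread).
Proof.
move=> I pm; have [_ vh unp others] := inv_private I pm.
have I1 : inv (set_pc s p VC_reread) by apply: inv_set_pc_local.
apply: (inv_delete I1) => //= p'; rewrite /upd.
by case: eqP => [_ //= | p'p]; apply: others.
Qed.

Lemma inv_step p s s' : inv s -> pstep p s s' -> inv s'.
Proof.
move=> I st; case: st I; intros; try by apply: inv_read_vhead.
(* steps that only move the program counter, to nodes it already refers to *)
all: try match goal with pc : pcs _ _ = _ |- _ =>
  by apply: inv_set_pc_local => //= a; rewrite pc end.
- by apply: inv_set_pc_local; first apply: inv_set_timestamp.
- by apply: inv_ctor.
- by apply: inv_it_cas_ok.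
- by apply: inv_ctor_done; eassumption.
- by apply: inv_rs_next; eassumption.
- by apply: inv_vcas_alloc; eassumption.
- by apply: inv_vcas_cas_ok; eassumption.
- by apply: inv_vcas_cas_fail; eassumption.
Qed.

Lemma inv_steps s s' : steps s s' -> inv s -> inv s'.
Proof. by elim=> // s1 s2 s3 [p st] _ IH I; apply: IH; apply: inv_step I st. Qed.

Lemma in_version_list_keep s s' n :
  vhead s' = vhead s -> keeps_links (heap s) (heap s') ->
  in_version_list s n -> in_version_list s' n.
Proof.
move=> vh keep [h [sh r]]; exists h; split; first by rewrite vh.
exact: reach_keeps_links keep r.
Qed.

Lemma version_list_vcas_cas_ok s p h m n :
  inv s -> pcs s p = VC_cas h m -> vhead s = Some h -> in_version_list s n ->
  in_version_list (set_pc (set_vhead s m) p (IT_check m K_true)) n.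
Proof.
move=> I pm vh [h' [vh' r]]; have [[nd mnd nh] _ _ _] := inv_private I pm.
exists m; split=> //; apply: reach_next mnd nh _.
by move: vh'; rewrite vh => -[->].
Qed.

Lemma version_list_vcas_cas_fail s p h m n :
  inv s -> pcs s p = VC_cas h m -> in_version_list s n ->
  in_version_list (set_pc (set_node s m None) p VC_reread) n.
Proof.
move=> I pm [h' [vh' r]]; have [_ vh unp _] := inv_private I pm.
exists h'; split=> //; apply: reach_upd_unpointed r => // h'm.
by apply: vh; rewrite vh' h'm.
Qed.

Lemma version_list_step p s s' n :
  inv s -> constructed s -> pstep p s s' -> in_version_list s n -> in_version_list s' n.
Proof.
(* all but five steps leave VHead and the heap untouched *)
move=> I con st; case: st I con; intros; try done.
- by have := inv_started_constructed I con; congruence.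
- by apply: in_version_list_keep => //=; apply: keeps_links_upd_same_link; [eassumption |].
- apply: in_version_list_keep => //=; apply: keeps_links_upd_unallocated.
  exact: inv_unallocated I _ (leqnn _).
- by apply: version_list_vcas_cas_ok; eassumption.
- by apply: version_list_vcas_cas_fail; eassumption.
Qed.

Lemma constructed_step p s s' : pstep p s s' -> constructed s -> constructed s'.
Proof. by case. Qed.

Lemma version_list_steps s s' n :
  steps s s' -> inv s -> constructed s -> in_version_list s n -> in_version_list s' n.
Proof.
elim=> // s1 s2 s3 [p st] _ IH I con vl.
apply: IH; [exact: inv_step I st | exact: constructed_step st con |].
exact: version_list_step I con st vl.
Qed.

End VersionList.

Theorem lemmaA1 (V : eqType) (s s' : state V) (n : nat) :
  steps (init_state V) s ->
  constructed s = true ->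
  in_version_list s n ->
  steps s s' ->
  in_version_list s' n.
Proof.
move=> reachable con vl run.
exact: version_list_steps run (inv_steps reachable (inv_init V)) con vl.
Qed.
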